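(* Let $R$ be an integral domain satisfying (R$_1$), and let $S$ be an overring of $R$ such that $R \subseteq S$ satisfies going-down. Then $S$ satisfies (R$_1$), every height one prime of $S$ contracts to a height one prime of $R$, and contraction $Q \mapsto Q \cap R$ gives an injective map $\operatorname{Spec}^1(S) \to \operatorname{Spec}^1(R)$ whose image is exactly the set of height one primes $\mathfrak{p}$ of $R$ with $\mathfrak{p}S \neq S$.
   Context: All rings are commutative with identity; an overring of a domain $R$ is a ring between $R$ and its fraction field. A ring extension $A \subseteq B$ satisfies going-down if whenever $\mathfrak{p} \subset \mathfrak{q}$ are primes of $A$ and $Q$ is a prime of $B$ with $Q \cap A = \mathfrak{q}$, there is a prime $P \subseteq Q$ of $B$ with $P \cap A = \mathfrak{p}$. A ring satisfies (R$_1$) if its localization at every height one prime is a valuation domain. $\operatorname{Spec}^1(A)$ denotes the set of height one primes of $A$. *)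

(* An integral domain R is represented as a subring of its
   fraction field K (a fieldType); overrings are subrings of K containing R.
   Subsets of K are Prop-valued predicates K -> Prop. *)
From HB Require Import structures.
From mathcomp Require Import all_boot all_algebra.
Set Implicit Arguments. Unset Strict Implicit. Unset Printing Implicit Defensive.
Import GRing.Theory.
Local Open Scope ring_scope.

Section Defs.
Variable K : fieldType.
Implicit Types A B R S I P Q V : K -> Prop.

Definition subset_of A B := forall x, A x -> B x.
Definition seteq A B := forall x, A x <-> B x.
Definition strict_subset A B := subset_of A B /\ exists x, B x /\ ~ A x.

(* A is a subring (with 1) of K; being inside a field it is a domain *)
Definition subring A :=
  [/\ A 0, A 1, (forall x y, A x -> A y -> A (x - y)) &
      (forall x y, A x -> A y -> A (x * y))].

Definition frac_field_of R :=
  subring R /\ forall x : K, exists a b, [/\ R a, R b, b != 0 & x = a / b].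

Definition overring R S := subring S /\ subset_of R S.

Definition ideal_of A I :=
  [/\ subset_of I A, I 0, (forall x y, I x -> I y -> I (x + y)) &
      (forall a x, A a -> I x -> I (a * x))].

Definition prime_of A P :=
  [/\ ideal_of A P, ~ P 1 &
      forall x y, A x -> A y -> P (x * y) -> P x \/ P y].

Definition height_ge A P (n : nat) :=
  exists c : nat -> K -> Prop,
    [/\ (forall i, (i <= n)%N -> prime_of A (c i)),
        (forall i, (i < n)%N -> strict_subset (c i) (c i.+1)) &
        seteq (c n) P].

Definition height_one A P :=
  prime_of A P /\ height_ge A P 1 /\ ~ height_ge A P 2.

Definition localization A P (x : K) :=
  exists a s, [/\ A a, A s, ~ P s & x = a / s].

Definition valuation_domain V := forall x : K, V x \/ V x^-1.

Definition R1 A :=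
  forall P, height_one A P -> valuation_domain (localization A P).

Definition contraction Q R (x : K) := Q x /\ R x.

Definition extension P S (x : K) :=
  exists l : seq (K * K),
    (forall z, z \in l -> P z.1 /\ S z.2) /\ x = \sum_(z <- l) z.1 * z.2.

Definition going_down R S :=
  forall p q Q, prime_of R p -> prime_of R q -> subset_of p q ->
    prime_of S Q -> seteq (contraction Q R) q ->
    exists P, [/\ prime_of S P, subset_of P Q & seteq (contraction P R) p].

End Defs.

(* Going-down lifts every chain of primes of R below Q ∩ R to a chain of
   primes of S below Q, so ht (Q ∩ R) <= ht Q and a height one prime of S
   contracts to a height one prime p; then R_p ⊆ S_Q gives (R_1) for S.
   As R_p is a valuation domain, primes of S over p are pairwise comparable:
   for x ∈ Q1 write x = a/s or 1/x = a/s with s ∉ p; in the first case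
   a = s x ∈ Q1 ∩ R ⊆ Q2 forces x ∈ Q2, while the second would put s = a x in
   Q1 ∩ R = p.  Comparability gives injectivity, and also that every prime
   over p has height one, since a nonzero prime strictly below it would again
   lie over p.  When pS ≠ S, a maximal ideal M ⊇ pS lies over a prime
   containing p, and going-down yields a prime of S under M lying over p. *)
From mathcomp Require Import all_boot all_algebra.
From mathcomp Require classical_sets.
From Stdlib Require Import Classical.
Set Implicit Arguments. Unset Strict Implicit. Unset Printing Implicit Defensive.
Import GRing.Theory.

Local Open Scope ring_scope.

Section Overrings.
Variable K : fieldType.
Implicit Types A R S I J M P Q V W p q : K -> Prop.

Lemma subringD A x y : subring A -> A x -> A y -> A (x + y).
Proof.
move=> [A0 _ Asub _] Ax Ay.
have: A (x - (0 - y)) by apply: (Asub) => //; apply: (Asub).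
by rewrite sub0r opprK.
Qed.

Lemma subringM A x y : subring A -> A x -> A y -> A (x * y).
Proof. by move=> [_ _ _ Amul]; apply: Amul. Qed.

Lemma closed_sum A (l : seq (K * K)) (f : K * K -> K) :
  A 0 -> (forall x y, A x -> A y -> A (x + y)) ->
  (forall z, z \in l -> A (f z)) -> A (\sum_(z <- l) f z).
Proof.
move=> A0 Aadd; elim: l => [|z l IH] Al; first by rewrite big_nil.
rewrite big_cons; apply: Aadd; first by apply: Al; exact: mem_head.
by apply: IH => w wl; apply: Al; rewrite inE wl orbT.
Qed.

Lemma prime_of_eq0 A : subring A -> prime_of A (fun x => x = 0).
Proof.
move=> [A0 _ _ _]; split; [split| |].
- by move=> x ->.
- done.
- by move=> x y -> ->; rewrite addr0.
- by move=> a x _ ->; rewrite mulr0.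
- by move/eqP; rewrite oner_eq0.
- by move=> x y _ _ /eqP; rewrite mulf_eq0 => /orP[/eqP|/eqP]; auto.
Qed.

Lemma contraction_prime R S Q :
  subring R -> subset_of R S -> prime_of S Q -> prime_of R (contraction Q R).
Proof.
move=> sR RS [[QS Q0 Qadd Qmul] Q1 Qprime]; split; [split| |].
- by move=> x [].
- by split=> //; case: sR.
- by move=> x y [Qx Rx] [Qy Ry]; split; [exact: Qadd | exact: subringD].
- by move=> a x Ra [Qx Rx]; split; [apply: Qmul => //; exact: RS | exact: subringM].
- by case.
- move=> x y Rx Ry [Qxy _].
  by case: (Qprime x y (RS _ Rx) (RS _ Ry) Qxy); [left|right]; split.
Qed.

Lemma contraction_nz R S Q :
  frac_field_of R -> subset_of R S -> prime_of S Q ->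
  (exists y, Q y /\ y != 0) -> exists a, contraction Q R a /\ a != 0.
Proof.
move=> [_ fracR] RS [[_ _ _ Qmul] _ _] [y [Qy y_neq0]].
have [a [b [Ra Rb b_neq0 ey]]] := fracR y; subst y.
exists a; split; last by apply: contraNneq y_neq0 => ->; rewrite mul0r.
by split=> //; rewrite -(divfK b_neq0 a) mulrC; apply: Qmul => //; exact: RS.
Qed.

Lemma strict_supset_prime_nz A P Q :
  prime_of A P -> strict_subset P Q -> exists y, Q y /\ y != 0.
Proof.
move=> [[_ P0 _ _] _ _] [_ [y [Qy nPy]]].
by exists y; split=> //; apply: contra_notN nPy => /eqP ->.
Qed.

Lemma height_ge1P A P :
  subring A -> prime_of A P -> height_ge A P 1 <-> exists y, P y /\ y != 0.
Proof.
move=> sA pP; split.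
  move=> [c [cp cs ce]].
  have [y [c1y y_neq0]] := strict_supset_prime_nz (cp 0%N isT) (cs 0%N isT).
  by exists y; split=> //; apply/ce.
move=> [y [Py y_neq0]].
exists (fun i => if i == 0%N then (fun x => x = 0) else P); split=> //.
- by move=> [|i] _ /=; [exact: prime_of_eq0 | done].
- move=> [|//] _ /=; split; first by move=> x ->; case: pP => [[]].
  by exists y; split=> //; apply/eqP.
Qed.

Lemma height_ge2_chain A p0 p1 p2 :
  prime_of A p0 -> prime_of A p1 -> prime_of A p2 ->
  strict_subset p0 p1 -> strict_subset p1 p2 -> height_ge A p2 2.
Proof.
move=> pp0 pp1 pp2 s01 s12.
exists (fun i => match i with 0 => p0 | 1 => p1 | _ => p2 end)%N.
by split=> [[|[|]]|[|[|]]|].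
Qed.

Lemma height_one_sub_eq A p q :
  subring A -> height_one A p -> prime_of A q ->
  (exists y, q y /\ y != 0) -> subset_of q p -> seteq q p.
Proof.
move=> sA [pp [_ not_ht2]] pq [y [qy y_neq0]] qp x; split; first exact: qp.
move=> px; apply: NNPP => nqx; apply: not_ht2.
apply: (height_ge2_chain (prime_of_eq0 sA) pq pp); split=> //.
- by move=> z ->; case: pq => [[]].
- by exists y; split=> //; apply/eqP.
- by exists x.
Qed.

Lemma going_down_height_ge R S Q n :
  subring R -> subset_of R S -> going_down R S -> prime_of S Q ->
  height_ge R (contraction Q R) n -> height_ge S Q n.
Proof.
move=> sR RS gd; elim: n Q => [|n IH] Q pQ [c [cp cs ce]].
  by exists (fun=> Q); split=> // i; rewrite leqn0.
have [sub_n [x [cx nc_x]]] := cs n (ltnSn n).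
have [P [pP PQ eP]] :=
  gd (c n) (c n.+1) Q (cp n (leqnSn n)) (cp n.+1 (leqnn _)) sub_n pQ
     (fun x => iff_sym (ce x)).
have [|d [dp ds de]] := IH P pP.
  exists c; split=> [i le_in|i lt_in|x']; [exact: cp (leqW le_in) |
    exact: cs (ltnW lt_in) | exact: iff_sym (eP x')].
exists (fun i => if (i <= n)%N then d i else Q); split.
- by move=> i _; case: leqP => [/dp|].
- move=> i; rewrite ltnS; case: ltngtP => // [lt_in _|-> _]; first exact: ds.
  split; first by move=> y /de /PQ.
  have [Qx Rx] := (ce x).1 cx.
  by exists x; split=> // /de Px; apply: nc_x; apply/eP.
- by move=> y; rewrite ltnn.
Qed.

Lemma height_one_contraction R S Q :
  frac_field_of R -> overring R S -> going_down R S ->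
  height_one S Q -> height_one R (contraction Q R).
Proof.
move=> fR [sS RS] gd [pQ [ht1 not_ht2]]; have sR := fR.1.
have pq := contraction_prime sR RS pQ.
split=> //; split; last by move/(going_down_height_ge sR RS gd pQ).
apply/(height_ge1P sR pq)/(contraction_nz fR RS pQ).
exact: (height_ge1P sS pQ).1 ht1.
Qed.

Lemma valuation_lying_over_sub R S p Q1 Q2 :
  subset_of R S -> valuation_domain (localization R p) ->
  prime_of S Q1 -> prime_of S Q2 ->
  seteq (contraction Q1 R) p -> seteq (contraction Q2 R) p -> subset_of Q1 Q2.
Proof.
move=> RS val [[Q1S _ _ Q1mul] _ _] [[_ Q20 _ _] _ Q2prime] e1 e2 x Q1x.
have [->|x_neq0] := eqVneq x 0; first by [].
case: (val x) => [] [a [s [Ra Rs nps ex]]].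
- have s_neq0 : s != 0.
    by apply: contra_neq x_neq0 => s0; rewrite ex s0 invr0 mulr0.
  have ea : a = s * x by rewrite ex mulrC divfK.
  have [Q2a _] : contraction Q2 R a.
    by apply/e2/e1; split=> //; rewrite ea; apply: Q1mul => //; exact: RS.
  have Q2xs : Q2 (x * s) by rewrite mulrC -ea.
  case: (Q2prime x s (Q1S _ Q1x) (RS _ Rs) Q2xs) => // Q2s.
  by case: nps; apply/e2.
- have s_neq0 : s != 0.
    by apply: contra_neq (invr_neq0 x_neq0) => s0; rewrite ex s0 invr0 mulr0.
  have es : s = a * x.
    by rewrite -[s]mul1r -(mulfV x_neq0) ex mulrA divfK // mulrC.
  by case: nps; apply/e1; split=> //; rewrite es; apply: Q1mul => //; exact: RS.
Qed.

Lemma height_one_lying_over R S p P :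
  frac_field_of R -> overring R S -> valuation_domain (localization R p) ->
  height_one R p -> prime_of S P -> seteq (contraction P R) p -> height_one S P.
Proof.
move=> fR [sS RS] val hp pP eP; have sR := fR.1.
split=> //; split.
  have [y [py y_neq0]] := (height_ge1P sR hp.1).1 hp.2.1.
  apply/(height_ge1P sS pP).
  by exists y; split=> //; exact: ((eP y).2 py).1.
move=> [c [cp cs ce]].
have [c1_sub_c2 [z [c2z nc1z]]] := cs 1%N isT.
have pc1 := cp 1%N isT.
have c1_nz := strict_supset_prime_nz (cp 0%N isT) (cs 0%N isT).
have e1 : seteq (contraction (c 1%N) R) p.
  apply: (height_one_sub_eq sR hp (contraction_prime sR RS pc1)).
    exact: (contraction_nz fR RS pc1 c1_nz).
  by move=> x [c1x Rx]; apply/eP; split=> //; apply/ce/c1_sub_c2.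
by apply: nc1z; apply: (valuation_lying_over_sub RS val pP pc1 eP e1); exact/ce.
Qed.

Lemma valuation_domain_sub V W :
  subset_of V W -> valuation_domain V -> valuation_domain W.
Proof. by move=> VW val x; case: (val x) => [/VW|/VW]; [left|right]. Qed.

Lemma localization_contraction_sub R S Q :
  subset_of R S -> subset_of (localization R (contraction Q R)) (localization S Q).
Proof.
move=> RS x [a [s [Ra Rs nqs ->]]].
by exists a, s; split; [exact: RS | exact: RS | move=> Qs; apply: nqs |].
Qed.

Lemma R1_going_down R S :
  frac_field_of R -> overring R S -> going_down R S -> R1 R -> R1 S.
Proof.
move=> fR oRS gd r1 Q hQ.
apply: (valuation_domain_sub (localization_contraction_sub (Q := Q) oRS.2)).
exact/r1/(height_one_contraction fR oRS gd hQ).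
Qed.

Lemma extension_ideal R S p :
  subring S -> subset_of R S -> subset_of p R -> ideal_of S (extension p S).
Proof.
move=> sS RS pR; split.
- move=> x [l [Hl ->]].
  apply: closed_sum; [by case: sS | by move=> ? ?; apply: subringD |].
  by move=> z /Hl [pz Sz]; apply: subringM => //; exact/RS/pR.
- by exists [::]; split=> //; rewrite big_nil.
- move=> x y [l1 [H1 ->]] [l2 [H2 ->]]; exists (l1 ++ l2); split.
    by move=> z; rewrite mem_cat => /orP[/H1|/H2].
  by rewrite big_cat.
- move=> a x Sa [l [Hl ->]]; exists (map (fun z => (z.1, a * z.2)) l); split.
    by move=> _ /mapP [z /Hl [pz Sz] ->]; split=> //; exact: subringM.
  by rewrite big_map mulr_sumr; apply: eq_bigr => z _; rewrite mulrCA.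
Qed.

Lemma mem_extension S p x : S 1 -> p x -> extension p S x.
Proof.
move=> S1 px; exists [:: (x, 1)]; split; last by rewrite big_seq1 mulr1.
by move=> z; rewrite inE => /eqP ->.
Qed.

Lemma extension_sub_ideal S p Q :
  ideal_of S Q -> subset_of p Q -> subset_of (extension p S) Q.
Proof.
move=> [_ Q0 Qadd Qmul] pQ x [l [Hl ->]]; apply: closed_sum => // z /Hl [pz Sz].
by rewrite mulrC; apply: Qmul => //; exact: pQ.
Qed.

Definition maximal_ideal_of S M :=
  [/\ ideal_of S M, ~ M 1 &
     forall J, ideal_of S J -> ~ J 1 -> subset_of M J -> subset_of J M].

Lemma ideal_adjoin S M z :
  subring S -> ideal_of S M -> S z ->
  ideal_of S (fun t => exists m a, [/\ M m, S a & t = m + a * z]).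
Proof.
move=> sS [MS M0 Madd Mmul] Sz; split.
- by move=> _ [m [a [Mm Sa ->]]]; apply: subringD (MS _ Mm) (subringM sS Sa Sz).
- by exists 0, 0; split=> //; [case: sS | rewrite mul0r addr0].
- move=> _ _ [m1 [a1 [Mm1 Sa1 ->]]] [m2 [a2 [Mm2 Sa2 ->]]].
  exists (m1 + m2), (a1 + a2); split; [exact: Madd | exact: subringD |].
  by rewrite mulrDl addrACA.
- move=> b _ Sb [m [a [Mm Sa ->]]]; exists (b * m), (b * a).
  by split; [exact: Mmul | exact: subringM | rewrite mulrDr mulrA].
Qed.

Lemma maximal_ideal_prime S M : subring S -> maximal_ideal_of S M -> prime_of S M.
Proof.
move=> sS [iM nM1 Mmax]; split=> //.
have [MS _ Madd Mmul] := iM.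
have comax z : S z -> ~ M z -> exists m a, [/\ M m, S a & 1 = m + a * z].
  move=> Sz nMz; apply: NNPP => no1; apply: nMz.
  apply: (Mmax _ (ideal_adjoin sS iM Sz)).
  - by move=> [m [a [Mm Sa e]]]; apply: no1; exists m, a.
  - by move=> m Mm; exists m, 0; split=> //; [case: sS | rewrite mul0r addr0].
  - by exists 0, 1; split; [case: iM | case: sS | rewrite add0r mul1r].
move=> x y Sx Sy Mxy; apply: NNPP => /not_or_and [nMx nMy].
have [m1 [a [Mm1 Sa e1]]] := comax x Sx nMx.
have [m2 [b [Mm2 Sb e2]]] := comax y Sy nMy.
apply: nM1.
have -> : 1 = m1 * (m2 + b * y) + (a * x) * m2 + (a * b) * (x * y).
  by rewrite -mulrACA -addrA -mulrDr -mulrDl -e2 mulr1 -e1.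
apply: (Madd); first apply: (Madd).
- rewrite mulrC; apply: (Mmul) => //.
  exact: subringD (MS _ Mm2) (subringM sS Sb Sy).
- exact: Mmul (subringM sS Sa Sx) Mm2.
- exact: Mmul (subringM sS Sa Sb) Mxy.
Qed.

Lemma maximal_ideal_exists S I :
  subring S -> ideal_of S I -> ~ I 1 ->
  exists M, maximal_ideal_of S M /\ subset_of I M.
Proof.
move=> sS [IS I0 Iadd Imul] nI1.
(* The empty set must be admitted: it is the union of the empty chain. *)
pose P A := [/\ subset_of A S, (forall x y, A x -> A y -> A (x + y)),
   (forall a x, S a -> A x -> A (a * x)), ~ A 1 & (exists x, A x) -> subset_of I A].
have [|M [[MS Madd Mmul nM1 MI] Mmax]] := @classical_sets.Zorn_bigcup K P.
  move=> F FP Ftot; split.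
  - by move=> x [X /FP [XS _ _ _ _] Xx]; exact: XS.
  - move=> x y [X FX Xx] [Y FY Yy].
    case: (Ftot X Y FX FY) => sub.
      by exists Y => //; have [_ Yadd _ _ _] := FP Y FY; exact: Yadd (sub _ Xx) Yy.
    by exists X => //; have [_ Xadd _ _ _] := FP X FX; exact: Xadd Xx (sub _ Yy).
  - move=> a x Sa [X FX Xx]; exists X => //.
    by have [_ _ Xmul _ _] := FP X FX; exact: Xmul.
  - by move=> [X /FP [_ _ _ nX1 _]].
  - move=> [x [X FX Xx]] z Iz; exists X => //.
    by have [_ _ _ _ XI] := FP X FX; apply: XI => //; exists x.
have {}MI : subset_of I M.
  apply: MI; apply: NNPP => Mempty; apply: (Mmax I); last by split=> // _.
  split=> [x Mx|IM]; first by case: Mempty; exists x.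
  by apply: Mempty; exists 0; exact: IM.
have iM : ideal_of S M.
  by split; [done | exact: MI | done | move=> a x Sa Mx; exact: Mmul].
exists M; split=> //; split=> // J [JS _ Jadd Jmul] nJ1 MJ x Jx.
apply: NNPP => nMx; apply: (Mmax J); first by split=> // /(_ x Jx).
by split=> // _ y Iy; exact/MJ/MI.
Qed.

Lemma going_down_lying_over R S p :
  subring R -> overring R S -> going_down R S -> prime_of R p ->
  ~ seteq (extension p S) S -> exists P, prime_of S P /\ seteq (contraction P R) p.
Proof.
move=> sR [sS RS] gd pp proper; have [[pR _ _ _] _ _] := pp.
have [_ S1 _ _] := sS.
have iE := extension_ideal sS RS pR.
have nE1 : ~ extension p S 1.
  move=> E1; apply: proper => x; split; first by case: iE => ES _ _ _; exact: ES.
  by move=> Sx; rewrite -[x]mulr1; case: iE => _ _ _ Emul; exact: Emul.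
have [M [maxM EM]] := maximal_ideal_exists sS iE nE1.
have pM := maximal_ideal_prime sS maxM.
have [P [pP _ eP]] := gd p _ M pp (contraction_prime sR RS pM)
  (fun x px => conj (EM _ (mem_extension S1 px)) (pR _ px)) pM (fun x => iff_refl _).
by exists P.
Qed.

Lemma lying_over_extension_proper R S p Q :
  subring S -> prime_of S Q -> seteq (contraction Q R) p -> ~ seteq (extension p S) S.
Proof.
move=> [_ S1 _ _] [iQ nQ1 _] eQ ES; apply: nQ1.
have E1 := (ES 1).2 S1.
by apply: (extension_sub_ideal iQ) E1 => x /eQ [].
Qed.

End Overrings.

Theorem proposition3p9 (K : fieldType) (R S : K -> Prop) :
  frac_field_of R -> overring R S -> going_down R S -> R1 R ->
  [/\ R1 S,
      (forall Q, height_one S Q -> height_one R (contraction Q R)),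
      (forall Q1 Q2, height_one S Q1 -> height_one S Q2 ->
         seteq (contraction Q1 R) (contraction Q2 R) -> seteq Q1 Q2) &
      (forall p, height_one R p ->
         ((exists Q, height_one S Q /\ seteq (contraction Q R) p) <->
          ~ seteq (extension p S) S))].
Proof.
move=> fR oRS gd r1; split.
- exact: R1_going_down fR oRS gd r1.
- by move=> Q; apply: height_one_contraction fR oRS gd.
- move=> Q1 Q2 h1 h2 e12 x.
  have hq := height_one_contraction fR oRS gd h1.
  have sub := valuation_lying_over_sub oRS.2 (r1 _ hq).
  have e21 y := iff_sym (e12 y).
  by split; [apply: (sub _ _ h1.1 h2.1 (fun=> iff_refl _) e21) |
             apply: (sub _ _ h2.1 h1.1 e21 (fun=> iff_refl _))].
- move=> p hp; split.
    by move=> [Q [hQ eQ]]; apply: lying_over_extension_proper oRS.1 hQ.1 eQ.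
  move=> /(going_down_lying_over fR.1 oRS gd hp.1) [P [pP eP]].
  by exists P; split=> //; apply: height_one_lying_over fR oRS (r1 _ hp) hp pP eP.
Qed.
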